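(* Let $A$ be a sub-tree of $T$ and $I\subseteq\mathcal{I}_A$. On $[0,d(r_A)]$, the function $f_A^I$ has at most $|V_A^I|$ corner points and at most $|V_A^I|+1$ maximal linear pieces. Moreover, the optimal sets associated with the successive linear pieces (from left to right) form a chain with respect to inclusion, each one containing the previous ones; equivalently, the matryoshka $\mathcal{M}_A^I$ is totally ordered by inclusion and has at most $|V_A^I|+1$ elements.
   Context: Setting. $T$ is a finite tree rooted at $r_T$, node set $V_T$; every edge $e$ has weight $w_e\ge 0$. Every node $v$ has a probability $\pi_v\in(0,1]$ and a prize $p_v\in\mathbb{R}$. $d(v)$ is the total weight of the path from $r_T$ to $v$. A random set $\omega\subseteq V_T$ contains each node $v$ independently with probability $\pi_v$. For $S\subseteq V_T$, $P(S)=1-\prod_{s\in S}(1-\pi_s)$ ($P(\emptyset)=0$). For a node $a$, the sub-tree $A$ rooted at $r_A=a$ consists of $a$ and all its descendants, with node set $V_A$; if $a$ has children $c_1,\dots,c_m$, then $A_i$ ($1\le i\le m$) is the sub-tree rooted at $c_i$, $A_0$ is the sub-tree consisting of the single node $r_A$, $\mathcal{I}_A=\{0,1,\dots,m\}$, and $V_A^I=\bigcup_{i\in I}V_{A_i}$ for $I\subseteq\mathcal{I}_A$. For $Q\subseteq V_T$, $W(Q)$ is the total weight of the edges lying on at least one path from $r_T$ to a node of $Q$. For $S\subseteq V_A$ and $x\le d(r_A)$ the expected profit is $G(S,x)=\sum_{s\in S}p_s\pi_s-\mathbb{E}[W(S\cap\omega)]+x\,P(S)$. Characteristic function. For a sub-tree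 $A$, $I\subseteq\mathcal{I}_A$ and $x\in[0,d(r_A)]$, $f_A^I(x)=\max_{S\subseteq V_A^I}G(S,x)$. A set $S\subseteq V_A^I$ with $G(S,x)=f_A^I(x)$ is an optimal set (for $f_A^I$) at $x$. The matryoshka $\mathcal{M}_A^I$ is the family of all $S\subseteq V_A^I$ such that for some $x\in[0,d(r_A)]$, $S$ is an optimal set at $x$ and no proper superset of $S$ contained in $V_A^I$ is optimal at $x$. *)

(* A rooted tree on a finite type V is given by a root r and
   a parent map par (par r = r, every node reaches r by iterating par).
   The edge (par u, u) of a non-root node u carries the weight w u. *)
From HB Require Import structures.
From mathcomp Require Import all_boot all_order all_algebra.
Set Implicit Arguments. Unset Strict Implicit. Unset Printing Implicit Defensive.
Import Order.TTheory GRing.Theory Num.Theory.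
Local Open Scope ring_scope.

Section TreeDefs.
Context {R : realFieldType} {V : finType}.

Definition is_rooted_tree (r : V) (par : V -> V) : Prop :=
  par r = r /\ forall v, exists k, iter k par v = r.

Definition anc (par : V -> V) (u v : V) : bool :=
  [exists k : 'I_#|V|.+1, iter k par v == u].

Definition dist (r : V) (par : V -> V) (w : V -> R) (v : V) : R :=
  \sum_(u | (u != r) && anc par u v) w u.

Definition Wt (r : V) (par : V -> V) (w : V -> R) (Q : {set V}) : R :=
  \sum_(u | (u != r) && [exists q in Q, anc par u q]) w u.

(* probability that the random set omega equals om *)
Definition probset (pi : V -> R) (om : {set V}) : R :=
  (\prod_(v in om) pi v) * \prod_(v in ~: om) (1 - pi v).

Definition EW (r : V) (par : V -> V) (w pi : V -> R) (S : {set V}) : R :=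
  \sum_(om : {set V}) probset pi om * Wt r par w (S :&: om).

Definition PS (pi : V -> R) (S : {set V}) : R := 1 - \prod_(s in S) (1 - pi s).

Definition G (r : V) (par : V -> V) (w pi p : V -> R) (S : {set V}) (x : R) : R :=
  \sum_(s in S) p s * pi s - EW r par w pi S + x * PS pi S.

Definition desc (par : V -> V) (a : V) : {set V} := [set v | anc par a v].

Definition children (r : V) (par : V -> V) (a : V) : {set V} :=
  [set c | (par c == a) && (c != r)].

(* Index sets: I_A is encoded as option V, None standing for index 0
   (the single-node sub-tree A_0 = {a}) and Some c for the sub-tree
   rooted at the child c. V_A^I: *)
Definition VAI (par : V -> V) (a : V) (I : {set option V}) : {set V} :=
  (if None \in I then [set a] else set0) :|: \bigcup_(c | Some c \in I) desc par c.

Definition fAI (r : V) (par : V -> V) (w pi p : V -> R) (a : V)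
  (I : {set option V}) (x : R) : R :=
  \big[Order.max/G r par w pi p set0 x]_(S : {set V} | S \subset VAI par a I)
     G r par w pi p S x.

Definition optimal (r : V) (par : V -> V) (w pi p : V -> R) (a : V)
  (I : {set option V}) (S : {set V}) (x : R) : Prop :=
  S \subset VAI par a I /\ G r par w pi p S x = fAI r par w pi p a I x.

Definition matryoshka (r : V) (par : V -> V) (w pi p : V -> R) (a : V)
  (I : {set option V}) (S : {set V}) : Prop :=
  S \subset VAI par a I /\
  exists x, 0 <= x <= dist r par w a /\ optimal r par w pi p a I S x /\
    forall S' : {set V}, S \proper S' -> S' \subset VAI par a I ->
      ~ optimal r par w pi p a I S' x.

Definition affine_on (f : R -> R) (b c : R) : Prop :=
  exists alpha beta : R, forall y, b <= y <= c -> f y = alpha + beta * y.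

Definition corner (f : R -> R) (lo hi x : R) : Prop :=
  lo < x < hi /\ ~ (exists e, 0 < e /\ affine_on f (x - e) (x + e)).

End TreeDefs.

From HB Require Import structures.
From mathcomp Require Import all_boot all_order all_algebra.
From mathcomp Require Import ring lra zify.
Set Implicit Arguments. Unset Strict Implicit. Unset Printing Implicit Defensive.
Import Order.TTheory GRing.Theory Num.Theory.
Local Open Scope ring_scope.

(* Write G(S, x) = K(S) + x P(S): affine in x, with slope P(S) nondecreasing in S.
   Averaging over the random set, E[W(S ∩ ω)] - x P(S) is the expectation of
   Q |-> W(Q) - x [Q <> {}] at Q = S ∩ ω.  W is submodular, and two nonempty
   subsets of the sub-tree at a both cover its root path of weight d(a) >= x, so
   this map is submodular and G(., x) is supermodular on subsets of V_A^I for
   x <= d(a).  Hence the union of a set optimal at x1 and a set optimal at x2 >= x1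
   is optimal at x2: the maximal optimal sets form a chain increasing with x.  The
   maximal optimal set at x stays optimal until the first crossing with a set of
   larger P, where the maximal optimal set grows strictly; so there are at most
   |V_A^I| breakpoints on [0, d(a)]. *)

Lemma sum_prod_setC (R : comPzSemiRingType) (T : finType) (F G : T -> R) :
  \sum_(J : {set T}) (\prod_(v in J) F v) * \prod_(v in ~: J) G v =
  \prod_v (F v + G v).
Proof.
rewrite bigA_distr; apply: eq_big => // J _.
rewrite [RHS](bigID (mem J)) /=; congr (_ * _).
  by apply: eq_bigr => i /= ->.
by apply: eq_big => [i|i]; rewrite ?inE // => /negbTE ->.
Qed.

Lemma sum_setU_setI (M : nmodType) (T : finType) (F : T -> M) (A B : {set T}) :
  \sum_(s in A) F s + \sum_(s in B) F s =
  \sum_(s in A :|: B) F s + \sum_(s in A :&: B) F s.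
Proof.
rewrite !(big_mkcond (fun s => s \in _)) -!big_split; apply: eq_bigr => s _.
by rewrite !inE; case: (s \in A); case: (s \in B); rewrite /= ?addr0 ?add0r.
Qed.

Lemma uniq_chain_size (T : finType) (U : {set T}) (s : seq {set T}) :
  uniq s -> (forall X, X \in s -> X \subset U) ->
  {in s &, forall S1 S2 : {set T}, S1 \subset S2 \/ S2 \subset S1} ->
  (size s <= #|U|.+1)%N.
Proof.
move=> us sU chain.
have ucard : uniq [seq #|X| | X : {set T} <- s].
  rewrite map_inj_in_uniq // => S1 S2 h1 h2 /= hc.
  by case: (chain _ _ h1 h2) => h; [|apply/esym]; apply/eqP;
    rewrite eqEcard h hc /=.
rewrite -(size_map (fun X : {set T} => #|X|) s) -(size_iota 0 #|U|.+1).
apply: uniq_leq_size => // _ /mapP [X hX ->].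
by rewrite mem_iota add0n ltnS subset_leq_card ?sU.
Qed.

Lemma path_between (R : realDomainType) (x0 x : R) (s : seq R) :
  path <%R x0 s -> x0 < x < last x0 s -> x \notin s ->
  exists2 i, (i < size s)%N & nth 0 (x0 :: s) i < x < nth 0 (x0 :: s) i.+1.
Proof.
elim: s x0 => [|y s IH] x0 /=.
  by move=> _ /andP [h1 h2]; have := lt_trans h1 h2; rewrite ltxx.
move=> /andP [x0y hp] /andP [x0x xl]; rewrite inE negb_or => /andP [xy xs].
case: (ltgtP x y) => [hxy|hyx|hxy]; last by rewrite hxy eqxx in xy.
  by exists 0%N; rewrite ?x0x ?hxy.
by have [i ??] := IH y hp (introT andP (conj hyx xl)) xs; exists i.+1.
Qed.

Section Corners.
Variable R : realFieldType.
Implicit Types (f : R -> R) (b c x lo hi : R).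

Lemma affine_on_interior f b c x :
  affine_on f b c -> b < x < c -> exists e, 0 < e /\ affine_on f (x - e) (x + e).
Proof.
move=> [al [be hab]] /andP [hb hc]; set e := Order.min (x - b) (c - x).
have [e1 e2] : e <= x - b /\ e <= c - x by rewrite !ge_min !lexx ?orbT.
exists e; split; first by rewrite lt_min !subr_gt0 hb hc.
by exists al, be => y /andP [y1 y2]; apply: hab; apply/andP; split; lra.
Qed.

Lemma corner_mem f lo hi (tt : seq R) x :
  path <%R lo (rcons tt hi) ->
  (forall i, (i <= size tt)%N -> affine_on f (nth 0 (lo :: rcons tt hi) i)
                                             (nth 0 (lo :: rcons tt hi) i.+1)) ->
  corner f lo hi x -> x \in tt.
Proof.
move=> hp haff [/andP [lox xhi] hnot]; apply/negPn/negP => xtt.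
have xs : x \notin rcons tt hi by rewrite mem_rcons inE (lt_eqF xhi).
have [|i] := path_between hp _ xs; first by rewrite last_rcons lox xhi.
rewrite size_rcons ltnS => /haff /affine_on_interior hint /hint.
exact: hnot.
Qed.

End Corners.

Section ParametricSupermodularMax.
Variables (R : realFieldType) (T : finType) (U : {set T}) (d : R).
Variables (g : {set T} -> R -> R) (K P : {set T} -> R).
Implicit Types (S A B : {set T}) (x : R).
Hypothesis gE : forall S x, g S x = K S + x * P S.
Hypothesis P_mono : forall A B, A \subset B -> P A <= P B.
Hypothesis g_supermod : forall A B x, A \subset U -> B \subset U -> x <= d ->
  g A x + g B x <= g (A :|: B) x + g (A :&: B) x.

Definition fmax x := \big[Order.max/g set0 x]_(S : {set T} | S \subset U) g S x.

Definition opt S x := S \subset U /\ g S x = fmax x.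

Definition maximal_opt S x :=
  opt S x /\ forall S', S \proper S' -> S' \subset U -> ~ opt S' x.

Lemma fmax_ge S x : S \subset U -> g S x <= fmax x.
Proof. by move=> hS; rewrite /fmax (bigD1 S) //= le_max lexx. Qed.

Lemma fmax_attained x : exists2 S : {set T}, S \subset U & fmax x = g S x.
Proof.
apply: (big_ind (fun y => exists2 S : {set T}, S \subset U & y = g S x)).
- by exists set0; rewrite ?sub0set.
- move=> y1 y2 [S1 h1 ->] [S2 h2 ->].
  by case: (leP (g S1 x) (g S2 x)) => h; [exists S2 | exists S1];
    rewrite ?max_r ?max_l // ltW.
- by move=> S hS; exists S.
Qed.

Lemma optP S x : S \subset U -> (forall S', S' \subset U -> g S' x <= g S x) -> opt S x.
Proof.
move=> hS hmax; split => //; have [S' hS' e] := fmax_attained x.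
by apply: le_anti; rewrite fmax_ge // e hmax.
Qed.

Lemma opt_ge S S' x : opt S x -> S' \subset U -> g S' x <= g S x.
Proof. by case=> _ ->; apply: fmax_ge. Qed.

(* Supermodularity at x1 gives g (S1 :|: S2) - g S2 >= g S1 - g (S1 :&: S2) >= 0
   at x1, and this difference is nondecreasing in x since P is monotone. *)
Lemma opt_setU S1 S2 x1 x2 : x1 <= x2 -> x1 <= d ->
  opt S1 x1 -> opt S2 x2 -> opt (S1 :|: S2) x2.
Proof.
move=> x12 x1d o1 o2; have [hS1 _] := o1; have [hS2 _] := o2.
apply: optP => [|S hS]; first by rewrite subUset hS1 hS2.
have hsup := g_supermod hS1 hS2 x1d.
have hI : g (S1 :&: S2) x1 <= g S1 x1 by apply: opt_ge o1 _; rewrite subIset ?hS1.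
have h2 := opt_ge o2 hS.
have hP : P S2 <= P (S1 :|: S2) by apply: P_mono; exact: subsetUr.
have hm : 0 <= (x2 - x1) * (P (S1 :|: S2) - P S2) by rewrite mulr_ge0 ?subr_ge0.
by move: hsup hI h2; rewrite !gE; lra.
Qed.

Lemma opt_sub_maximal S1 S2 x1 x2 : x1 <= x2 -> x1 <= d ->
  opt S1 x1 -> maximal_opt S2 x2 -> S1 \subset S2.
Proof.
move=> x12 x1d o1 [o2 hmax]; have oU := opt_setU x12 x1d o1 o2.
have : ~~ (S2 \proper S1 :|: S2) by apply/negP => hp; exact: hmax hp oU.1 oU.
by rewrite properE subsetUr /= negbK subUset => /andP [].
Qed.

Lemma maximal_opt_chain S1 S2 x1 x2 : x1 <= d -> x2 <= d ->
  maximal_opt S1 x1 -> maximal_opt S2 x2 -> S1 \subset S2 \/ S2 \subset S1.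
Proof.
move=> x1d x2d m1 m2; case: (leP x1 x2) => h.
  by left; apply: opt_sub_maximal h x1d m1.1 m2.
by right; apply: opt_sub_maximal (ltW h) x2d m2.1 m1.
Qed.

Lemma opt_affine_on S b c :
  (forall x, b <= x <= c -> opt S x) -> affine_on fmax b c.
Proof.
by move=> hopt; exists (K S), (P S) => y /hopt [_ <-]; rewrite gE mulrC.
Qed.

Definition Mopt x := \bigcup_(S : {set T} | (S \subset U) && (g S x == fmax x)) S.

Lemma Mopt_subU x : Mopt x \subset U.
Proof. by apply/bigcupsP => S /andP []. Qed.

Lemma sub_Mopt S x : opt S x -> S \subset Mopt x.
Proof. by case=> hS e; apply: bigcup_sup; rewrite hS e eqxx. Qed.

Lemma Mopt_opt x : x <= d -> opt (Mopt x) x.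
Proof.
move=> xd; have [S hS eS] := fmax_attained x.
have oS : opt S x by [].
have : Mopt x = set0 \/ opt (Mopt x) x.
  apply: (big_ind (fun X => X = set0 \/ opt X x)); first by left.
    move=> X Y [->|oX] [->|oY]; rewrite ?set0U ?setU0;
      [by left | by right | by right | right; exact: opt_setU (lexx x) xd oX oY].
  by move=> S' /andP [hS' /eqP e]; right.
by case=> // e; move: (sub_Mopt oS); rewrite e subset0 => /eqP <-.
Qed.

(* The abscissa where the affine functions g S and g S' meet. *)
Definition crossing S S' := (K S - K S') / (P S' - P S).

Definition next_break x :=
  \big[Order.min/d]_(S : {set T} | (S \subset U) && (P (Mopt x) < P S)) crossing (Mopt x) S.

Lemma lt_crossing x S : x <= d -> S \subset U -> P (Mopt x) < P S ->
  x < crossing (Mopt x) S.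
Proof.
move=> xd hS hP; have oM := Mopt_opt xd.
have hlt : g S x < g (Mopt x) x.
  rewrite ltNge; apply/negP => hle.
  have oS : opt S x by apply: optP => // S' /(opt_ge oM) /le_trans; apply.
  by move: hP; rewrite ltNge P_mono // sub_Mopt.
rewrite /crossing ltr_pdivlMr ?subr_gt0 //; move: hlt; rewrite !gE; lra.
Qed.

Lemma lt_next_break x : x < d -> x < next_break x.
Proof.
move=> xd; apply: (big_ind (fun y => x < y)) => //.
  by move=> y1 y2 h1 h2; rewrite lt_min h1 h2.
by move=> S /andP [hS hP]; apply: lt_crossing => //; exact: ltW.
Qed.

Lemma next_break_attained x : next_break x < d ->
  exists2 S : {set T}, (S \subset U) && (P (Mopt x) < P S) & next_break x = crossing (Mopt x) S.
Proof.
have : next_break x = d \/ exists2 S : {set T}, (S \subset U) && (P (Mopt x) < P S) &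
  next_break x = crossing (Mopt x) S.
  apply: (big_rec (fun y => y = d \/ exists2 S : {set T}, (S \subset U) && (P (Mopt x) < P S) &
    y = crossing (Mopt x) S)); first by left.
  by move=> S y hS hy; case: leP => _ //; right; exists S.
by case=> [->|//]; rewrite ltxx.
Qed.

Lemma next_break_le_crossing x S : S \subset U -> P (Mopt x) < P S ->
  next_break x <= crossing (Mopt x) S.
Proof. by move=> hS hP; rewrite /next_break (bigD1 S) ?hS ?hP //= ge_min lexx. Qed.

Lemma Mopt_opt_until x y : x <= d -> x <= y <= next_break x -> opt (Mopt x) y.
Proof.
move=> xd /andP [xy ynb]; apply: optP (Mopt_subU x) _ => S hS.
case: (ltP (P (Mopt x)) (P S)) => hP.
  have := le_trans ynb (next_break_le_crossing hS hP).
  by rewrite /crossing ler_pdivlMr ?subr_gt0 // !gE; lra.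
have hx := opt_ge (Mopt_opt xd) hS.
have hm : 0 <= (y - x) * (P (Mopt x) - P S) by rewrite mulr_ge0 ?subr_ge0.
by move: hx; rewrite !gE; lra.
Qed.

Lemma Mopt_next_break x : x < d -> next_break x < d -> Mopt x \proper Mopt (next_break x).
Proof.
move=> xd nd; have xnb := ltW (lt_next_break xd).
have oM : opt (Mopt x) (next_break x).
  by apply: Mopt_opt_until (ltW xd) _; rewrite xnb lexx.
have [S /andP [hS hP] e] := next_break_attained nd.
have oS : opt S (next_break x).
  have hz : P S - P (Mopt x) != 0 by rewrite subr_eq0 gt_eqF.
  have meet : g S (next_break x) = g (Mopt x) (next_break x).
    by rewrite !gE e /crossing; field.
  by apply: optP => // S'; rewrite meet; exact: opt_ge.
rewrite properEneq (sub_Mopt oM) andbT; apply: (contraTneq _ hP) => ->.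
by rewrite -leNgt P_mono // sub_Mopt.
Qed.

Lemma opt_subdivision x0 : x0 < d -> exists (tt : seq R) (Ss : seq {set T}),
  [/\ path <%R x0 (rcons tt d), (size tt <= #|U| - #|Mopt x0|)%N, size Ss = size tt,
      (forall i, (i <= size Ss)%N -> forall x,
        nth 0 (x0 :: rcons tt d) i <= x <= nth 0 (x0 :: rcons tt d) i.+1 ->
        opt (nth set0 (Mopt x0 :: Ss) i) x) &
      (forall i, (i < size Ss)%N ->
        nth set0 (Mopt x0 :: Ss) i \subset nth set0 (Mopt x0 :: Ss) i.+1)].
Proof.
have [k] := ubnP (#|U| - #|Mopt x0|); elim: k x0 => // k IH x0 hk x0d.
have x0nb := lt_next_break x0d.
case: (ltP (next_break x0) d) => nbd; last first.
  exists [::], [::]; split => //=; first by rewrite x0d.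
  case=> // _ x /andP [x0x xd]; apply: Mopt_opt_until (ltW x0d) _.
  by rewrite x0x (le_trans xd nbd).
have hp := Mopt_next_break x0d nbd.
have hcard : (#|U| - #|Mopt (next_break x0)| < #|U| - #|Mopt x0|)%N.
  by have := proper_card hp; have := subset_leq_card (Mopt_subU (next_break x0)); lia.
have [tt [Ss [hpath hsize hSs hopt hnest]]] := IH _ (leq_trans hcard hk) nbd.
exists (next_break x0 :: tt), (Mopt (next_break x0) :: Ss); split => /=.
- by rewrite x0nb.
- exact: leq_ltn_trans hsize hcard.
- by rewrite hSs.
- case=> [_ x /andP [x0x xnb] | i]; last exact: hopt.
  by apply: Mopt_opt_until (ltW x0d) _; rewrite x0x.
- by case=> [_ | i]; [exact: proper_sub | exact: hnest].
Qed.

Lemma fmax_pieces x0 : x0 <= d ->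
  (forall s : seq R, uniq s -> (forall x, x \in s -> corner fmax x0 d x) ->
     (size s <= #|U|)%N) /\
  (exists (t : seq R) (Ss : seq {set T}),
     [/\ (0 < size t)%N, head 0 t = x0, last 0 t = d & sorted <%R t] /\
     (size t <= #|U| + 2)%N /\ size Ss = (size t).-1 /\
     (forall i, (i < size Ss)%N ->
        affine_on fmax (nth 0 t i) (nth 0 t i.+1) /\
        forall x, nth 0 t i <= x <= nth 0 t i.+1 -> opt (nth set0 Ss i) x) /\
     (forall i, (i.+1 < size Ss)%N -> nth set0 Ss i \subset nth set0 Ss i.+1)).
Proof.
rewrite le_eqVlt => /orP [/eqP <- | x0d].
  split=> [[|x s] //= _ /(_ x (mem_head _ _)) [/andP [h1 h2] _] |].
    by have := lt_trans h1 h2; rewrite ltxx.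
  by exists [:: x0], [::]; do !split => //=; rewrite addn2.
have [tt [Ss [hpath hsize hSs hopt hnest]]] := opt_subdivision x0d.
have hsizeU : (size tt <= #|U|)%N := leq_trans hsize (leq_subr _ _).
have haff i : (i <= size tt)%N ->
    affine_on fmax (nth 0 (x0 :: rcons tt d) i) (nth 0 (x0 :: rcons tt d) i.+1).
  by rewrite -hSs => /hopt; exact: opt_affine_on.
split.
  move=> s us hs; apply: leq_trans hsizeU; apply: uniq_leq_size => // x /hs.
  exact: corner_mem hpath haff.
exists (x0 :: rcons tt d), (Mopt x0 :: Ss); split; first by rewrite /= last_rcons.
rewrite /= size_rcons hSs; split; first by rewrite addn2 ltnS.
split=> //; split=> i; rewrite ltnS => hi; last by apply: hnest; rewrite hSs.
by split; [exact: haff | apply: hopt; rewrite hSs].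
Qed.

End ParametricSupermodularMax.

Section TreeCost.
Variables (R : realFieldType) (V : finType) (r : V) (par : V -> V) (w pi p : V -> R).
Hypothesis w_ge0 : forall v, 0 <= w v.
Hypothesis pi_range : forall v, 0 < pi v <= 1.
Implicit Types (A B S Q om : {set V}) (u v : V) (x : R).

Lemma anc_iter u v k : iter k par v = u -> anc par u v.
Proof.
move=> <-; have hc : fconnect par v (iter k par v) by rewrite fconnect_iter.
have lt : (findex par v (iter k par v) < #|V|.+1)%N.
  exact: leq_trans (findex_max hc) (leqW (max_card _)).
by apply/existsP; exists (Ordinal lt); rewrite /= iter_findex.
Qed.

Lemma anc_trans u v q : anc par u v -> anc par v q -> anc par u q.
Proof.
move=> /existsP [k1 /eqP h1] /existsP [k2 /eqP h2].
by apply: (@anc_iter _ _ (k1 + k2)); rewrite iterD h2.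
Qed.

Lemma VAI_sub_desc a (I : {set option V}) : (forall c, Some c \in I -> c \in children r par a) ->
  VAI par a I \subset desc par a.
Proof.
move=> HI; rewrite /VAI subUset; apply/andP; split.
  by case: ifP => _; rewrite ?sub0set // sub1set inE (@anc_iter _ _ 0).
apply/bigcupsP => c /HI; rewrite inE => /andP [/eqP pc _].
by apply/subsetP => v; rewrite !inE; apply: anc_trans; apply: (@anc_iter _ _ 1).
Qed.

Lemma probset_ge0 om : 0 <= probset pi om.
Proof.
apply: mulr_ge0; apply: prodr_ge0 => v _; have /andP [pi0 pi1] := pi_range v.
  exact: ltW.
by rewrite subr_ge0.
Qed.

Lemma sum_probset : \sum_(om : {set V}) probset pi om = 1.
Proof. by rewrite sum_prod_setC; apply: big1 => v _; rewrite addrC subrK. Qed.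

Lemma sum_probset_disjoint S :
  \sum_(om : {set V}) probset pi om * (S :&: om == set0)%:R = \prod_(s in S) (1 - pi s).
Proof.
transitivity (\sum_(om : {set V}) (\prod_(v in om) (if v \in S then 0 else pi v)) *
                      \prod_(v in ~: om) (1 - pi v)).
  apply: eq_bigr => om _; rewrite /probset.
  have [SI0|] := eqVneq (S :&: om) set0.
    rewrite mulr1; congr (_ * _); apply: eq_bigr => v vom.
    by case: ifP => // vS; move: SI0 => /setP /(_ v); rewrite !inE vS vom.
  case/set0Pn=> v; rewrite inE => /andP [vS vom].
  by rewrite mulr0 (bigD1 v) //= vS !mul0r.
rewrite sum_prod_setC [RHS]big_mkcond; apply: eq_bigr => v _.
by case: ifP => _; rewrite ?add0r // addrC subrK.
Qed.

Lemma PS_probset S : PS pi S = \sum_(om : {set V}) probset pi om * (S :&: om != set0)%:R.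
Proof.
have nE (b : bool) : (~~ b)%:R = 1 - b%:R :> R by case: b; rewrite ?subrr ?subr0.
under eq_bigr do rewrite nE mulrBr mulr1.
by rewrite sumrB sum_probset sum_probset_disjoint.
Qed.

Lemma PS_mono A B : A \subset B -> PS pi A <= PS pi B.
Proof.
move=> AB; rewrite /PS lerD2l lerN2 (big_setID A) /= (setIidPr AB).
apply: ler_piMr.
  by apply: prodr_ge0 => v _; case/andP: (pi_range v) => _; rewrite subr_ge0.
apply: prodr_ile1 => v _; case/andP: (pi_range v) => pi0 pi1.
by rewrite subr_ge0 pi1 gerBl ltW.
Qed.

Definition covers Q u := (u != r) && [exists q in Q, anc par u q].

Lemma Wt_covers Q : Wt r par w Q = \sum_u (if covers Q u then w u else 0).
Proof. exact: big_mkcond. Qed.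

Lemma Wt_set0 : Wt r par w set0 = 0.
Proof. by apply: big1 => u /andP [_ /existsP [q]]; rewrite inE. Qed.

Lemma covers_setU A B u : covers (A :|: B) u = covers A u || covers B u.
Proof.
rewrite /covers -andb_orr; congr (_ && _); apply/existsP/orP.
  by case=> q /andP []; rewrite inE => /orP [] hq hu; [left | right];
    apply/existsP; exists q; rewrite hq.
by case=> /existsP [q /andP [hq hu]]; exists q; rewrite inE hq ?orbT.
Qed.

Lemma covers_setI A B u : covers (A :&: B) u -> covers A u && covers B u.
Proof.
rewrite /covers => /andP [-> /existsP [q /andP []]]; rewrite inE => /andP [qA qB] hu.
by apply/andP; split; apply/existsP; exists q; rewrite ?qA ?qB.
Qed.

Lemma covers_anc a A u : A \subset desc par a -> A != set0 -> u != r -> anc par u a ->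
  covers A u.
Proof.
move=> Aa /set0Pn [q qA] ur ua; rewrite /covers ur; apply/existsP; exists q.
by rewrite qA (anc_trans ua) //; move/subsetP: Aa => /(_ q qA); rewrite inE.
Qed.

Lemma Wt_submod A B : Wt r par w (A :|: B) + Wt r par w (A :&: B) <=
  Wt r par w A + Wt r par w B.
Proof.
rewrite !Wt_covers -!big_split /=; apply: ler_sum => u _.
rewrite covers_setU; have := @covers_setI A B u; have := w_ge0 u.
by case: (covers A u); case: (covers B u); case: (covers (A :&: B) u) => //=;
  rewrite ?addr0 ?add0r ?lerDl // => _ /(_ isT).
Qed.

(* Nonempty subsets of the sub-tree at [a] both cover the whole root path of [a]. *)
Lemma Wt_setU_desc a A B : A \subset desc par a -> B \subset desc par a ->
  A != set0 -> B != set0 ->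
  Wt r par w (A :|: B) + dist r par w a <= Wt r par w A + Wt r par w B.
Proof.
move=> Aa Ba A0 B0; rewrite !Wt_covers /dist [X in _ + X <= _]big_mkcond -!big_split /=.
apply: ler_sum => u _; rewrite covers_setU.
case: (boolP ((u != r) && anc par u a)) => [/andP [ur ua] | _].
  by rewrite !(covers_anc _ _ ur ua).
by have := w_ge0 u; case: (covers A u); case: (covers B u); rewrite /= ?addr0 ?add0r; lra.
Qed.

Definition loss x Q := Wt r par w Q - x * (Q != set0)%:R.

Lemma loss_submod a A B x : A \subset desc par a -> B \subset desc par a ->
  x <= dist r par w a -> loss x (A :|: B) + loss x (A :&: B) <= loss x A + loss x B.
Proof.
move=> Aa Ba xd.
have [->|A0] := eqVneq A set0; first by rewrite set0U set0I addrC.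
have [->|B0] := eqVneq B set0; first by rewrite setU0 setI0.
have U0 : A :|: B != set0 by rewrite setU_eq0 negb_and A0.
rewrite /loss A0 B0 U0; have [->|_] := eqVneq (A :&: B) set0.
  by have := Wt_setU_desc Aa Ba A0 B0; rewrite Wt_set0 /=; lra.
by have := Wt_submod A B; rewrite /=; lra.
Qed.

Lemma G_loss S x : G r par w pi p S x =
  \sum_(s in S) p s * pi s - \sum_(om : {set V}) probset pi om * loss x (S :&: om).
Proof.
rewrite /G PS_probset /EW -addrA mulr_sumr -sumrN -big_split /=; congr (_ + _).
by rewrite -sumrN; apply: eq_bigr => om _; rewrite /loss; ring.
Qed.

Lemma G_supermod a A B x : A \subset desc par a -> B \subset desc par a ->
  x <= dist r par w a ->
  G r par w pi p A x + G r par w pi p B x <=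
  G r par w pi p (A :|: B) x + G r par w pi p (A :&: B) x.
Proof.
move=> Aa Ba xd; rewrite !G_loss.
have := sum_setU_setI (fun s => p s * pi s) A B.
suff : \sum_(om : {set V}) probset pi om * loss x ((A :|: B) :&: om) +
       \sum_(om : {set V}) probset pi om * loss x ((A :&: B) :&: om) <=
       \sum_(om : {set V}) probset pi om * loss x (A :&: om) +
       \sum_(om : {set V}) probset pi om * loss x (B :&: om) by lra.
rewrite -!big_split /=; apply: ler_sum => om _.
rewrite -!mulrDr ler_wpM2l ?probset_ge0 // setIUl.
rewrite -[om in A :&: B :&: om]setIid setIACA.
by apply: loss_submod xd; rewrite subIset ?Aa ?Ba.
Qed.

End TreeCost.

Theorem proposition5 (R : realFieldType) (V : finType) (r : V) (par : V -> V)
  (w pi p : V -> R)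
  (Htree : is_rooted_tree r par)
  (Hw : forall v, 0 <= w v)
  (Hpi : forall v, 0 < pi v <= 1)
  (a : V) (I : {set option V})
  (HI : forall c, Some c \in I -> c \in children r par a) :
  let f := fAI r par w pi p a I in
  let n := #|VAI par a I| in
  let d := dist r par w a in
  (forall s : seq R, uniq s -> (forall x, x \in s -> corner f 0 d x) ->
     (size s <= n)%N) /\
  (exists (t : seq R) (Ss : seq {set V}),
     [/\ (0 < size t)%N, head 0 t = 0, last 0 t = d & sorted <%R t] /\
     (size t <= n + 2)%N /\ size Ss = (size t).-1 /\
     (forall i, (i < size Ss)%N ->
        affine_on f (nth 0 t i) (nth 0 t i.+1) /\
        forall x, nth 0 t i <= x <= nth 0 t i.+1 ->
          optimal r par w pi p a I (nth set0 Ss i) x) /\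
     (forall i, (i.+1 < size Ss)%N -> nth set0 Ss i \subset nth set0 Ss i.+1)) /\
  (forall S1 S2, matryoshka r par w pi p a I S1 -> matryoshka r par w pi p a I S2 ->
     S1 \subset S2 \/ S2 \subset S1) /\
  (forall s : seq {set V}, uniq s ->
     (forall S, S \in s -> matryoshka r par w pi p a I S) -> (size s <= n + 1)%N).
Proof.
move=> f n d.
have gE S x : G r par w pi p S x =
    (\sum_(s in S) p s * pi s - EW r par w pi S) + x * PS pi S by [].
have gsup (A B : {set V}) x : A \subset VAI par a I -> B \subset VAI par a I -> x <= d ->
    G r par w pi p A x + G r par w pi p B x <=
    G r par w pi p (A :|: B) x + G r par w pi p (A :&: B) x.
  by move=> AU BU; apply: (G_supermod p Hw Hpi);
    apply: subset_trans (VAI_sub_desc HI); [exact: AU | exact: BU].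
have d0 : 0 <= d by apply: sumr_ge0 => u _; exact: Hw.
have [corners pieces] := fmax_pieces gE (PS_mono Hpi) gsup d0.
have chain (S1 S2 : {set V}) : matryoshka r par w pi p a I S1 -> matryoshka r par w pi p a I S2 ->
    S1 \subset S2 \/ S2 \subset S1.
  by move=> [_ [x1 [/andP [_ x1d] m1]]] [_ [x2 [/andP [_ x2d] m2]]];
    exact: (maximal_opt_chain gE (PS_mono Hpi) gsup x1d x2d m1 m2).
do !split => //.
move=> s us hs; rewrite addn1.
by apply: uniq_chain_size us _ _ => [S /hs [] | S1 S2 /hs m1 /hs m2]; [|exact: chain].
Qed.
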